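(* Let $(L,[\cdot,\cdot],\{\cdot,\cdot,\cdot\},\alpha)$ be a Hom-Lie-Yamaguti algebra over a field $\mathbb{K}$. If $HomH^2(L,L)\times HomH^3(L,L)=0$, then $(L,[\cdot,\cdot],\{\cdot,\cdot,\cdot\},\alpha)$ is analytically rigid.
   Context: A Hom-Lie-Yamaguti algebra (HLYA) over a commutative ring $R$ (here $R=\mathbb{K}$ a field or $R=\mathbb{K}[[t]]$) is a quadruple $(L,[\cdot,\cdot],\{\cdot,\cdot,\cdot\},\alpha)$ where $L$ is an $R$-module, $[\cdot,\cdot]$ is an $R$-bilinear and $\{\cdot,\cdot,\cdot\}$ an $R$-trilinear operation on $L$ (written $[xy]$, $\{xyz\}$), and $\alpha:L\to L$ is $R$-linear, such that for all $x,y,z,u,v\in L$: $\alpha([xy])=[\alpha(x)\alpha(y)]$; $\alpha(\{xyz\})=\{\alpha(x)\alpha(y)\alpha(z)\}$; $[xx]=0$; $\{xxy\}=0$; $\circlearrowleft_{x,y,z}([[xy]\alpha(z)]+\{xyz\})=0$; $\circlearrowleft_{x,y,z}\{[xy]\alpha(z)\alpha(u)\}=0$; $\{\alpha(x)\alpha(y)[uv]\}=[\{xyu\}\alpha^2(v)]+[\alpha^2(u)\{xyv\}]$; $\{\alpha^2(u)\alpha^2(v)\{xyz\}\}=\{\{uvx\}\alpha^2(y)\alpha^2(z)\}+\{\alpha^2(x)\{uvy\}\alpha^2(z)\}+\{\alpha^2(x)\alpha^2(y)\{uvz\}\}$, where $\circlearrowleft_{x,y,z}$ denotes the sum over cyclic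 permutations of $x,y,z$. Cochains: for $n\ge1$, $HomC^n(L,L)$ is the set of $\mathbb{K}$-multilinear maps $f:L^n\to L$ with $f(x_1,\dots,x_n)=0$ whenever $x_{2i-1}=x_{2i}$ for some $i$, and $f(\alpha(x_1),\dots,\alpha(x_n))=\alpha(f(x_1,\dots,x_n))$. For $h\in HomC^1(L,L)$ put $\delta_I^1h(x,y)=[xh(y)]+[h(x)y]-h([xy])$ and $\delta_{II}^1h(x,y,z)=\{h(x)yz\}+\{xh(y)z\}+\{xyh(z)\}-h(\{xyz\})$. For $(f,g)\in HomC^2(L,L)\times HomC^3(L,L)$ put $\delta_I^2(f,g)(x,y,z,u)=\{\alpha(x)\alpha(y)f(z,u)\}-f(\{xyz\},\alpha^2(u))-f(\alpha^2(z),\{xyu\})+g(\alpha(x),\alpha(y),[zu])-[\alpha^2(z)g(x,y,u)]-[g(x,y,z)\alpha^2(u)]$, $\delta_{II}^2 g(x,y,u,v,w)=\{\alpha^2(x)\alpha^2(y)g(u,v,w)\}-\{g(x,y,u)\alpha^2(v)\alpha^2(w)\}-\{\alpha^2(u)g(x,y,v)\alpha^2(w)\}-\{\alpha^2(u)\alpha^2(v)g(x,y,w)\}+g(\alpha^2(x),\alpha^2(y),\{uvw\})-g(\{xyu\},\alpha^2(v),\alpha^2(w))-g(\alpha^2(u),\{xyv\},\alpha^2(w))-g(\alpha^2(u),\alpha^2(v),\{xyw\})$, $d_I^2(f,g)(x,y,z)=\circlearrowleft_{x,y,z}([f(x,y)\alpha(z)]+f([xy],\alpha(z))+g(x,y,z))$,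 $d_{II}^2(f,g)(x,y,z,u)=\circlearrowleft_{x,y,z}(\{f(x,y)\alpha(z)\alpha(u)\}+g([xy],\alpha(z),\alpha(u)))$. Then $HomZ^2(L,L)\times HomZ^3(L,L)$ is the set of $(f,g)\in HomC^2\times HomC^3$ with $\delta_I^2(f,g)=0$, $\delta_{II}^2g=0$, $d_I^2(f,g)=0$, $d_{II}^2(f,g)=0$; $HomB^2(L,L)\times HomB^3(L,L)=\{(\delta_I^1h,\delta_{II}^1h): h\in HomC^1(L,L)\}$ (contained in the former); and $HomH^2(L,L)\times HomH^3(L,L)=(HomZ^2\times HomZ^3)/(HomB^2\times HomB^3)$. Deformations: $\mathbb{K}$-multilinear maps on $L$ are extended $\mathbb{K}[[t]]$-multilinearly to $L[[t]]$, and $\alpha$ is extended $\mathbb{K}[[t]]$-linearly. A one-parameter formal deformation of $(L,[\cdot,\cdot],\{\cdot,\cdot,\cdot\},\alpha)$ is a pair $f_t=\sum_{i\ge0}f_it^i$, $g_t=\sum_{i\ge0}g_it^i$ with $f_0=[\cdot,\cdot]$, $g_0=\{\cdot,\cdot,\cdot\}$, each $f_i$ $\mathbb{K}$-bilinear on $L$ and each $g_i$ $\mathbb{K}$-trilinear on $L$, such that $(L[[t]],f_t,g_t,\alpha)$ is an HLYA over $\mathbb{K}[[t]]$. Two deformations $(f_t,g_t)$, $(f_t',g_t')$ are equivalent if there is a $\mathbb{K}[[t]]$-linear isomorphism $\Phi_t=\sum_{i\ge0}\phi_it^i$ of $L[[t]]$ (each $\phi_i:L\to L$ $\mathbb{K}$-linear)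 with $\phi_0=\mathrm{id}_L$, $\Phi_t\circ\alpha=\alpha\circ\Phi_t$, $\Phi_t(f_t(x,y))=f_t'(\Phi_t(x),\Phi_t(y))$ and $\Phi_t(g_t(x,y,z))=g_t'(\Phi_t(x),\Phi_t(y),\Phi_t(z))$. A deformation is trivial if it is equivalent to the null deformation $(f_0,g_0)$ (i.e. $f_i=0$, $g_i=0$ for all $i\ge1$). The HLYA is analytically rigid if every one-parameter formal deformation of it is trivial. *)

From HB Require Import structures.
From mathcomp Require Import all_boot all_order all_algebra.
From mathcomp Require Import boolp functions.
Set Implicit Arguments. Unset Strict Implicit. Unset Printing Implicit Defensive.
Import GRing.Theory.
Local Open Scope ring_scope.

Definition HLYA_identities (V : zmodType) (br : V -> V -> V)
  (tr : V -> V -> V -> V) (al : V -> V) : Prop :=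
  let al2 := fun x => al (al x) in
  (forall x y, al (br x y) = br (al x) (al y)) /\
      (forall x y z, al (tr x y z) = tr (al x) (al y) (al z)) /\
      (forall x, br x x = 0) /\
      (forall x y, tr x x y = 0) /\
      (forall x y z, (br (br x y) (al z) + tr x y z)
                   + (br (br y z) (al x) + tr y z x)
                   + (br (br z x) (al y) + tr z x y) = 0) /\
      (forall x y z u, tr (br x y) (al z) (al u) + tr (br y z) (al x) (al u)
                     + tr (br z x) (al y) (al u) = 0) /\
      (forall x y u v, tr (al x) (al y) (br u v)
                     = br (tr x y u) (al2 v) + br (al2 u) (tr x y v)) /\
      (forall x y z u v, tr (al2 u) (al2 v) (tr x y z)
                     = tr (tr u v x) (al2 y) (al2 z) + tr (al2 x) (tr u v y) (al2 z)
                     + tr (al2 x) (al2 y) (tr u v z)).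

Section Lin.
Variables (K : fieldType) (L : lmodType K).

Definition lin1 (h : L -> L) : Prop :=
  forall (c : K) x y, h (c *: x + y) = c *: h x + h y.

Definition bilin (f : L -> L -> L) : Prop :=
  (forall z, lin1 (f ^~ z)) /\ (forall x, lin1 (f x)).

Definition trilin (g : L -> L -> L -> L) : Prop :=
  (forall y z, lin1 (fun x => g x y z)) /\ (forall x z, lin1 (fun y => g x y z))
  /\ (forall x y, lin1 (g x y)).

Definition HLYA (br : L -> L -> L) (tr : L -> L -> L -> L) (al : L -> L) : Prop :=
  [/\ bilin br, trilin tr, lin1 al & HLYA_identities br tr al].

Definition HomC1 (al : L -> L) (h : L -> L) : Prop :=
  lin1 h /\ (forall x, h (al x) = al (h x)).
Definition HomC2 (al : L -> L) (f : L -> L -> L) : Prop :=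
  [/\ bilin f, (forall x, f x x = 0) & (forall x y, f (al x) (al y) = al (f x y))].
Definition HomC3 (al : L -> L) (g : L -> L -> L -> L) : Prop :=
  [/\ trilin g, (forall x z, g x x z = 0)
    & (forall x y z, g (al x) (al y) (al z) = al (g x y z))].

Variables (br : L -> L -> L) (tr : L -> L -> L -> L) (al : L -> L).
Let al2 x := al (al x).

Definition deltaI1 (h : L -> L) : L -> L -> L :=
  fun x y => br x (h y) + br (h x) y - h (br x y).
Definition deltaII1 (h : L -> L) : L -> L -> L -> L :=
  fun x y z => tr (h x) y z + tr x (h y) z + tr x y (h z) - h (tr x y z).

Definition deltaI2 (f : L -> L -> L) (g : L -> L -> L -> L) x y z u : L :=
  tr (al x) (al y) (f z u) - f (tr x y z) (al2 u) - f (al2 z) (tr x y u)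
  + g (al x) (al y) (br z u) - br (al2 z) (g x y u) - br (g x y z) (al2 u).

Definition deltaII2 (g : L -> L -> L -> L) x y u v w : L :=
  tr (al2 x) (al2 y) (g u v w) - tr (g x y u) (al2 v) (al2 w)
  - tr (al2 u) (g x y v) (al2 w) - tr (al2 u) (al2 v) (g x y w)
  + g (al2 x) (al2 y) (tr u v w) - g (tr x y u) (al2 v) (al2 w)
  - g (al2 u) (tr x y v) (al2 w) - g (al2 u) (al2 v) (tr x y w).

Definition dI2 (f : L -> L -> L) (g : L -> L -> L -> L) x y z : L :=
  (br (f x y) (al z) + f (br x y) (al z) + g x y z)
  + (br (f y z) (al x) + f (br y z) (al x) + g y z x)
  + (br (f z x) (al y) + f (br z x) (al y) + g z x y).

Definition dII2 (f : L -> L -> L) (g : L -> L -> L -> L) x y z u : L :=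
  (tr (f x y) (al z) (al u) + g (br x y) (al z) (al u))
  + (tr (f y z) (al x) (al u) + g (br y z) (al x) (al u))
  + (tr (f z x) (al y) (al u) + g (br z x) (al y) (al u)).

Definition HomZ23 (f : L -> L -> L) (g : L -> L -> L -> L) : Prop :=
  [/\ HomC2 al f, HomC3 al g,
      (forall x y z u, deltaI2 f g x y z u = 0),
      (forall x y u v w, deltaII2 g x y u v w = 0) &
      ((forall x y z, dI2 f g x y z = 0) /\
       (forall x y z u, dII2 f g x y z u = 0))].

Definition HomB23 (f : L -> L -> L) (g : L -> L -> L -> L) : Prop :=
  exists h, [/\ HomC1 al h, f = deltaI1 h & g = deltaII1 h].

(* HomH^2(L,L) x HomH^3(L,L) = 0, i.e. HomZ^2 x HomZ^3 = HomB^2 x HomB^3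
   (the inclusion of coboundaries in cocycles being part of the context). *)
Definition HomH23_zero : Prop :=
  forall f g, HomZ23 f g -> HomB23 f g.

(* ---------- formal power series L[[t]] = nat -> L (coefficients) ---------- *)
(* K[[t]]-multilinear extensions of sequences of K-multilinear maps. *)
Definition ext1 (phi : nat -> L -> L) (a : nat -> L) : nat -> L :=
  fun n => \sum_(i < n.+1) phi i (a (n - i)%N).
Definition ext2 (f : nat -> L -> L -> L) (a b : nat -> L) : nat -> L :=
  fun n => \sum_(i < n.+1) \sum_(j < (n.+1 - i)%N) f i (a j) (b (n - i - j)%N).
Definition ext3 (g : nat -> L -> L -> L -> L) (a b c : nat -> L) : nat -> L :=
  fun n => \sum_(i < n.+1) \sum_(j < (n.+1 - i)%N) \sum_(k < (n.+1 - i - j)%N)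
             g i (a j) (b k) (c (n - i - j - k)%N).
Definition extal (a : nat -> L) : nat -> L := fun n => al (a n).

Definition deformation (f : nat -> L -> L -> L) (g : nat -> L -> L -> L -> L) : Prop :=
  [/\ f 0%N = br, g 0%N = tr, (forall i, bilin (f i)), (forall i, trilin (g i)) &
      HLYA_identities (V := (nat -> L)) (ext2 f) (ext3 g) extal].

Definition equiv_deformations (f : nat -> L -> L -> L) (g : nat -> L -> L -> L -> L)
  (f' : nat -> L -> L -> L) (g' : nat -> L -> L -> L -> L) : Prop :=
  exists phi : nat -> L -> L,
    [/\ (forall i, lin1 (phi i)) /\ phi 0%N = id,
        bijective (ext1 phi),
        (forall a, ext1 phi (extal a) = extal (ext1 phi a)),
        (forall a b, ext1 phi (ext2 f a b) = ext2 f' (ext1 phi a) (ext1 phi b)) &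
        (forall a b c, ext1 phi (ext3 g a b c)
                       = ext3 g' (ext1 phi a) (ext1 phi b) (ext1 phi c))].

Definition null_f : nat -> L -> L -> L :=
  fun i => if i is 0%N then br else fun _ _ => 0.
Definition null_g : nat -> L -> L -> L -> L :=
  fun i => if i is 0%N then tr else fun _ _ _ => 0.

Definition trivial_deformation f g : Prop := equiv_deformations f g null_f null_g.

Definition analytically_rigid : Prop :=
  forall f g, deformation f g -> trivial_deformation f g.

End Lin.

(* A deformation (f_t, g_t) transported along a formal automorphism Phi_t of
   L[[t]] with Phi_0 = id is an equivalent deformation.  If its coefficients of
   degrees 1, ..., N - 1 vanish, comparing degree-N terms in the HLYA identities
   shows that (f_N, g_N) is a 2,3-cocycle, hence by hypothesis the coboundary of
   some h; transporting further along 1 + h t^N kills the degree-N coefficients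
   without touching lower degrees.  The successive corrections act in ever higher
   degrees, so their composite converges coefficientwise to an automorphism
   transporting (f_t, g_t) to the null deformation.
   Series are coefficient sequences nat -> L: [tcst x] is x seen as a constant
   series and [tsh] is multiplication by t. *)

From mathcomp Require Import all_boot all_order all_algebra.
From mathcomp Require Import boolp functions zify.
From Stdlib Require Import ClassicalEpsilon.
Set Implicit Arguments. Unset Strict Implicit. Unset Printing Implicit Defensive.
Import GRing.Theory.
Local Open Scope ring_scope.

Section Multilinear.
Variables (K : fieldType) (L : lmodType K).

Lemma lin1D (h : L -> L) : lin1 h -> forall x y, h (x + y) = h x + h y.
Proof. by move=> hlin x y; have := hlin 1 x y; rewrite !scale1r. Qed.

Lemma lin10 (h : L -> L) : lin1 h -> h 0 = 0.
Proof. by move=> hlin; apply: (addIr (h 0)); rewrite -lin1D // !add0r. Qed.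

Lemma lin1_sum (h : L -> L) (I : Type) (r : seq I) (P : pred I) (F : I -> L) :
  lin1 h -> h (\sum_(i <- r | P i) F i) = \sum_(i <- r | P i) h (F i).
Proof. by move=> hlin; apply: (big_morph h (lin1D hlin) (lin10 hlin)). Qed.

Lemma bilin0l (f : L -> L -> L) y : bilin f -> f 0 y = 0.
Proof. by case=> flin _; apply: (lin10 (flin y)). Qed.

Lemma bilin0r (f : L -> L -> L) x : bilin f -> f x 0 = 0.
Proof. by case=> _ flin; apply: (lin10 (flin x)). Qed.

Lemma trilin0l (g : L -> L -> L -> L) y z : trilin g -> g 0 y z = 0.
Proof. by case=> glin _; apply: (lin10 (glin y z)). Qed.

Lemma trilin0m (g : L -> L -> L -> L) x z : trilin g -> g x 0 z = 0.
Proof. by case=> _ [glin _]; apply: (lin10 (glin x z)). Qed.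

Lemma trilin0r (g : L -> L -> L -> L) x y : trilin g -> g x y 0 = 0.
Proof. by case=> _ [_ glin]; apply: (lin10 (glin x y)). Qed.

End Multilinear.

Section DiagonalSums.
Variable V : zmodType.
Implicit Types (F G : nat -> nat -> V).

Definition diag_sum n F : V := \sum_(i < n.+1) F i (n - i)%N.

Lemma diag_sum0 F : diag_sum 0 F = F 0%N 0%N.
Proof. by rewrite /diag_sum big_ord1. Qed.

Lemma diag_sumSl n F : diag_sum n.+1 F = F 0%N n.+1 + diag_sum n (fun i => F i.+1).
Proof. by rewrite /diag_sum big_ord_recl subn0. Qed.

Lemma diag_sumSr n F :
  diag_sum n.+1 F = diag_sum n (fun i r => F i r.+1) + F n.+1 0%N.
Proof.
rewrite /diag_sum big_ord_recr /= subnn; congr (_ + _).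
by apply: eq_bigr => i _; rewrite subSn // -ltnS.
Qed.

Lemma eq_diag_sum n F G : (forall i r, F i r = G i r) -> diag_sum n F = diag_sum n G.
Proof. by move=> eqFG; apply: eq_bigr. Qed.

Lemma eq_diag_sum_le n F G :
  (forall i r, (i <= n)%N -> (r <= n)%N -> F i r = G i r) ->
  diag_sum n F = diag_sum n G.
Proof.
by move=> eqFG; apply: eq_bigr => i _; apply: eqFG; rewrite ?leq_subr // -ltnS.
Qed.

Lemma diag_sum_eq0 n F : (forall i r, F i r = 0) -> diag_sum n F = 0.
Proof. by move=> F0; apply: big1. Qed.

Lemma diag_sum_lastE n F :
  (forall i, (i < n)%N -> F i (n - i)%N = 0) -> diag_sum n F = F n 0%N.
Proof.
by move=> F0; rewrite /diag_sum big_ord_recr /= subnn big1 ?add0r // => i _; apply: F0.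
Qed.

Lemma diag_sum_firstE n F :
  (forall i, (0 < i <= n)%N -> F i (n - i)%N = 0) -> diag_sum n F = F 0%N n.
Proof.
move=> F0; rewrite /diag_sum big_ord_recl /= subn0 big1 ?addr0 // => i _.
by apply: F0; rewrite /= ltn_ord.
Qed.

Lemma diag_sum_endsE n F : (0 < n)%N ->
  (forall i r, (0 < i < n)%N -> F i r = 0) -> diag_sum n F = F 0%N n + F n 0%N.
Proof.
case: n => // n _ F0; rewrite diag_sumSl diag_sum_lastE // => i lt_in.
exact: F0.
Qed.

End DiagonalSums.

Lemma diag_sumZD (K : pzRingType) (V : lmodType K) n (c : K) (F G : nat -> nat -> V) :
  diag_sum n (fun i r => c *: F i r + G i r) = c *: diag_sum n F + diag_sum n G.
Proof. by rewrite /diag_sum big_split /= scaler_sumr. Qed.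

Section PowerSeries.
Variables (K : fieldType) (L : lmodType K).
Local Notation S := (nat -> L).

Definition tcst (x : L) : S := fun n => if n is 0%N then x else 0.
Definition tsh (a : S) : S := fun n => if n is m.+1 then a m else 0.

Lemma tcst_pos x n : (0 < n)%N -> tcst x n = 0.
Proof. by case: n. Qed.

Lemma tcstZD c x y : tcst (c *: x + y) = c *: tcst x + tcst y.
Proof. by apply: funext => -[|n]; rewrite !fctE /= ?scaler0 ?addr0. Qed.

Lemma series_decomp (a : S) : a = tcst (a 0%N) + tsh (fun n => a n.+1).
Proof. by apply: funext => -[|n]; rewrite fctE /= ?addr0 ?add0r. Qed.

Lemma iter_tshE k (a : S) n :
  iter k tsh a n = if (k <= n)%N then a (n - k)%N else 0.
Proof.
elim: k n => [|k IHk] n /=; first by rewrite subn0.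
by case: n => [|n] //=; rewrite IHk ltnS subSS.
Qed.

Record tlinear (U : S -> S) : Prop := TLinear {
  tlinearP : forall c a b, U (c *: a + b) = c *: U a + U b;
  tlinear_tsh : forall a, U (tsh a) = tsh (U a) }.

Record tbilinear (T : S -> S -> S) : Prop := TBilinear {
  tbilinear_l : forall b, tlinear (T^~ b);
  tbilinear_r : forall a, tlinear (T a) }.

Record ttrilinear (T : S -> S -> S -> S) : Prop := TTrilinear {
  ttrilinear_1 : forall b c, tlinear (fun a => T a b c);
  ttrilinear_2 : forall a c, tlinear (fun b => T a b c);
  ttrilinear_3 : forall a b, tlinear (T a b) }.

Lemma tlinearD U a b : tlinear U -> U (a + b) = U a + U b.
Proof. by move=> Ulin; rewrite -[a]scale1r tlinearP // !scale1r. Qed.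

Lemma tlinear0 U : tlinear U -> U 0 = 0.
Proof. by move=> Ulin; apply: (addIr (U 0)); rewrite -tlinearD // !add0r. Qed.

Lemma tlinear_iter U k a : tlinear U -> U (iter k tsh a) = iter k tsh (U a).
Proof. by move=> Ulin; elim: k => //= k <-; rewrite tlinear_tsh. Qed.

Lemma tlinear_id : tlinear id.
Proof. by []. Qed.

Lemma tlinear_comp U V : tlinear U -> tlinear V -> tlinear (fun a => U (V a)).
Proof. by move=> [UZD Ush] [VZD Vsh]; split=> *; rewrite ?VZD ?Vsh ?UZD ?Ush. Qed.

Lemma tbilinear_conj T P Q : tbilinear T -> tlinear P -> tlinear Q ->
  tbilinear (fun a b => P (T (Q a) (Q b))).
Proof.
move=> [Tl Tr] Plin Qlin.
split=> a; first exact: tlinear_comp Plin (tlinear_comp (Tl (Q a)) Qlin).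
exact: tlinear_comp Plin (tlinear_comp (Tr (Q a)) Qlin).
Qed.

Lemma ttrilinear_conj T P Q : ttrilinear T -> tlinear P -> tlinear Q ->
  ttrilinear (fun a b c => P (T (Q a) (Q b) (Q c))).
Proof.
move=> [T1 T2 T3] Plin Qlin.
split=> a b.
- exact: tlinear_comp Plin (tlinear_comp (T1 (Q a) (Q b)) Qlin).
- exact: tlinear_comp Plin (tlinear_comp (T2 (Q a) (Q b)) Qlin).
- exact: tlinear_comp Plin (tlinear_comp (T3 (Q a) (Q b)) Qlin).
Qed.

Lemma tlinear_add U V : tlinear U -> tlinear V -> tlinear (fun a => U a + V a).
Proof.
move=> [UZD Ush] [VZD Vsh]; split=> [c a b|a]; first by rewrite UZD VZD scalerDr addrACA.
by rewrite Ush Vsh; apply: funext => -[|n]; rewrite !fctE /= ?addr0.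
Qed.

Lemma tlinear_iter_tsh k : tlinear (iter k tsh).
Proof.
elim: k => [|k [IHZD IHsh]] //; split=> [c a b|a] /=; last by rewrite IHsh.
by rewrite IHZD; apply: funext => -[|n]; rewrite !fctE /= ?scaler0 ?addr0.
Qed.

Lemma tlinear_map (h : L -> L) : lin1 h -> tlinear (fun a n => h (a n)).
Proof.
move=> hlin; split=> [c a b|a]; apply: funext => n; first by rewrite !fctE /= hlin.
by case: n => [|n] //=; rewrite lin10.
Qed.

Lemma tlinear_eq U V : tlinear U -> tlinear V ->
  (forall x, U (tcst x) = V (tcst x)) -> U = V.
Proof.
move=> Ulin Vlin eqUV; apply: funext => a; apply: funext => n.
elim: n a => [|n IHn] a; rewrite (series_decomp a) !tlinearD //.
  by rewrite (tlinear_tsh Ulin) (tlinear_tsh Vlin) !fctE /= eqUV.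
by rewrite (tlinear_tsh Ulin) (tlinear_tsh Vlin) !fctE /= eqUV IHn.
Qed.

Lemma tbilinear_eq T T' : tbilinear T -> tbilinear T' ->
  (forall x y, T (tcst x) (tcst y) = T' (tcst x) (tcst y)) -> T = T'.
Proof.
move=> [Tl Tr] [T'l T'r] eqTT'.
have eq_cst x b : T (tcst x) b = T' (tcst x) b.
  by rewrite (tlinear_eq (Tr _) (T'r _) (eqTT' x)).
apply: funext => a; apply: funext => b.
exact: (congr1 (fun F => F a) (tlinear_eq (Tl b) (T'l b) (eq_cst^~ b))).
Qed.

Lemma ttrilinear_eq T T' : ttrilinear T -> ttrilinear T' ->
  (forall x y z, T (tcst x) (tcst y) (tcst z) = T' (tcst x) (tcst y) (tcst z)) -> T = T'.
Proof.
move=> [T1 T2 T3] [T'1 T'2 T'3] eqTT'.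
have eq_cst2 x y c : T (tcst x) (tcst y) c = T' (tcst x) (tcst y) c.
  by rewrite (tlinear_eq (T3 _ _) (T'3 _ _) (eqTT' x y)).
have eq_cst1 x b c : T (tcst x) b c = T' (tcst x) b c.
  exact: (congr1 (fun F => F b) (tlinear_eq (T2 _ c) (T'2 _ c) (eq_cst2 x ^~ c))).
apply: funext => a; apply: funext => b; apply: funext => c.
exact: (congr1 (fun F => F a) (tlinear_eq (T1 b c) (T'1 b c) (fun x => eq_cst1 x b c))).
Qed.

End PowerSeries.

Arguments tsh {K L}.
Arguments tlinear_id {K L}.
Arguments tlinear_iter_tsh {K L}.

Section Extensions.
Variables (K : fieldType) (L : lmodType K).
Local Notation S := (nat -> L).

Definition lin1_seq (phi : nat -> L -> L) := forall i, lin1 (phi i).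
Definition bilin_seq (f : nat -> L -> L -> L) := forall i, bilin (f i).
Definition trilin_seq (g : nat -> L -> L -> L -> L) := forall i, trilin (g i).

Lemma ext1E phi (a : S) n : ext1 phi a n = diag_sum n (fun i r => phi i (a r)).
Proof. by []. Qed.

Lemma ext2E f (a b : S) n :
  ext2 f a b n = diag_sum n (fun i r => diag_sum r (fun j s => f i (a j) (b s))).
Proof. by apply: eq_bigr => i _; rewrite subSn // -ltnS. Qed.

Lemma ext3E g (a b c : S) n :
  ext3 g a b c n = diag_sum n (fun i r => diag_sum r (fun j s =>
    diag_sum s (fun k t => g i (a j) (b k) (c t)))).
Proof.
apply: eq_bigr => i _; rewrite subSn; last by rewrite -ltnS.
by apply: eq_bigr => j _; rewrite subSn // -ltnS.
Qed.

Lemma ext1_tlinear phi : lin1_seq phi -> tlinear (ext1 phi).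
Proof.
move=> philin; split=> [c a b|a]; apply: funext => n.
  by rewrite !fctE /= !ext1E -diag_sumZD; apply: eq_diag_sum => i r; apply: philin.
by case: n => [|n]; rewrite !ext1E ?diag_sum0 ?diag_sumSr /= lin10 ?addr0.
Qed.

Lemma ext2_tbilinear f : bilin_seq f -> tbilinear (ext2 f).
Proof.
move=> flin; split=> [b|a]; split=> [c u v|u]; apply: funext => n.
- rewrite !fctE /= !ext2E -diag_sumZD; apply: eq_diag_sum => i r.
  rewrite -diag_sumZD; apply: eq_diag_sum => j s; exact: (flin i).1.
- case: n => [|n]; rewrite !ext2E ?diag_sum0 /= ?bilin0l //.
  rewrite diag_sumSr diag_sum0 /= bilin0l // addr0 ext2E.
  by apply: eq_diag_sum => i r; rewrite diag_sumSl /= bilin0l // add0r.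
- rewrite !fctE /= !ext2E -diag_sumZD; apply: eq_diag_sum => i r.
  rewrite -diag_sumZD; apply: eq_diag_sum => j s; exact: (flin i).2.
- case: n => [|n]; rewrite !ext2E ?diag_sum0 /= ?bilin0r //.
  rewrite diag_sumSr diag_sum0 /= bilin0r // addr0 ext2E.
  by apply: eq_diag_sum => i r; rewrite diag_sumSr /= bilin0r // addr0.
Qed.

Lemma ext3_ttrilinear g : trilin_seq g -> ttrilinear (ext3 g).
Proof.
move=> glin; split=> [b d|a d|a b]; split=> [c u v|u]; apply: funext => n.
- rewrite !fctE /= !ext3E -diag_sumZD; apply: eq_diag_sum => i r.
  rewrite -diag_sumZD; apply: eq_diag_sum => j s.
  rewrite -diag_sumZD; apply: eq_diag_sum => k t; exact: (glin i).1.
- case: n => [|n]; rewrite !ext3E ?diag_sum0 /= ?trilin0l //.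
  rewrite diag_sumSr !diag_sum0 /= trilin0l // addr0 ext3E.
  apply: eq_diag_sum => i r; rewrite diag_sumSl /= diag_sum_eq0 ?add0r // => k t.
  exact: trilin0l.
- rewrite !fctE /= !ext3E -diag_sumZD; apply: eq_diag_sum => i r.
  rewrite -diag_sumZD; apply: eq_diag_sum => j s.
  rewrite -diag_sumZD; apply: eq_diag_sum => k t; exact: (glin i).2.1.
- case: n => [|n]; rewrite !ext3E ?diag_sum0 /= ?trilin0m //.
  rewrite diag_sumSr !diag_sum0 /= trilin0m // addr0 ext3E.
  apply: eq_diag_sum => i r; rewrite diag_sumSr diag_sum0 /= trilin0m // addr0.
  by apply: eq_diag_sum => j s; rewrite diag_sumSl /= trilin0m // add0r.
- rewrite !fctE /= !ext3E -diag_sumZD; apply: eq_diag_sum => i r.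
  rewrite -diag_sumZD; apply: eq_diag_sum => j s.
  rewrite -diag_sumZD; apply: eq_diag_sum => k t; exact: (glin i).2.2.
- case: n => [|n]; rewrite !ext3E ?diag_sum0 /= ?trilin0r //.
  rewrite diag_sumSr !diag_sum0 /= trilin0r // addr0 ext3E.
  apply: eq_diag_sum => i r; rewrite diag_sumSr diag_sum0 /= trilin0r // addr0.
  by apply: eq_diag_sum => j s; rewrite diag_sumSr /= trilin0r // addr0.
Qed.

Lemma ext1_0 phi (a : S) : ext1 phi a 0 = phi 0%N (a 0%N).
Proof. by rewrite ext1E diag_sum0. Qed.

Lemma ext2_0 f (a b : S) : ext2 f a b 0 = f 0%N (a 0%N) (b 0%N).
Proof. by rewrite ext2E !diag_sum0. Qed.

Lemma ext3_0 g (a b c : S) : ext3 g a b c 0 = g 0%N (a 0%N) (b 0%N) (c 0%N).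
Proof. by rewrite ext3E !diag_sum0. Qed.

Lemma ext1_tcst phi x n : lin1_seq phi -> ext1 phi (tcst x) n = phi n x.
Proof.
move=> philin; rewrite ext1E diag_sum_lastE // => i lt_in.
by rewrite tcst_pos ?lin10 // subn_gt0.
Qed.

Lemma ext2_tcstr f (a : S) y n : bilin_seq f ->
  ext2 f a (tcst y) n = diag_sum n (fun i r => f i (a r) y).
Proof.
move=> flin; rewrite ext2E; apply: eq_diag_sum => i r.
by rewrite diag_sum_lastE // => j lt_jr; rewrite tcst_pos ?bilin0r // subn_gt0.
Qed.

Lemma ext2_tcstl f (b : S) x n : bilin_seq f ->
  ext2 f (tcst x) b n = diag_sum n (fun i r => f i x (b r)).
Proof.
move=> flin; rewrite ext2E; apply: eq_diag_sum => i r.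
by rewrite diag_sum_firstE // => j /andP[j_gt0 _]; rewrite tcst_pos ?bilin0l.
Qed.

Lemma ext2_tcst f x y : bilin_seq f -> ext2 f (tcst x) (tcst y) = fun n => f n x y.
Proof.
move=> flin; apply: funext => n; rewrite ext2_tcstr // diag_sum_lastE // => i lt_in.
by rewrite tcst_pos ?bilin0l // subn_gt0.
Qed.

Lemma ext3_tcst23 g (a : S) y z n : trilin_seq g ->
  ext3 g a (tcst y) (tcst z) n = diag_sum n (fun i r => g i (a r) y z).
Proof.
move=> glin; rewrite ext3E; apply: eq_diag_sum => i r.
rewrite (@eq_diag_sum _ _ _ (fun j s => g i (a j) y (tcst z s))); last first.
  move=> j s; rewrite diag_sum_firstE // => k /andP[k_gt0 _].
  by rewrite tcst_pos ?trilin0m.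
by rewrite diag_sum_lastE // => j lt_jr; rewrite tcst_pos ?trilin0r // subn_gt0.
Qed.

Lemma ext3_tcst13 g (b : S) x z n : trilin_seq g ->
  ext3 g (tcst x) b (tcst z) n = diag_sum n (fun i r => g i x (b r) z).
Proof.
move=> glin; rewrite ext3E; apply: eq_diag_sum => i r.
rewrite diag_sum_firstE => [|j /andP[j_gt0 _]]; last first.
  by apply: diag_sum_eq0 => k t; rewrite tcst_pos ?trilin0l.
rewrite diag_sum_lastE // => k lt_kr.
by rewrite (@tcst_pos _ _ z (r - k)) ?trilin0r // subn_gt0.
Qed.

Lemma ext3_tcst12 g (c : S) x y n : trilin_seq g ->
  ext3 g (tcst x) (tcst y) c n = diag_sum n (fun i r => g i x y (c r)).
Proof.
move=> glin; rewrite ext3E; apply: eq_diag_sum => i r.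
rewrite diag_sum_firstE => [|j /andP[j_gt0 _]]; last first.
  by apply: diag_sum_eq0 => k t; rewrite tcst_pos ?trilin0l.
rewrite diag_sum_firstE // => k /andP[k_gt0 _].
by rewrite (@tcst_pos _ _ y k) ?trilin0m.
Qed.

Lemma ext3_tcst g x y z : trilin_seq g ->
  ext3 g (tcst x) (tcst y) (tcst z) = fun n => g n x y z.
Proof.
move=> glin; apply: funext => n; rewrite ext3_tcst23 // diag_sum_lastE // => i lt_in.
by rewrite tcst_pos ?trilin0l // subn_gt0.
Qed.

Lemma ext1_eq_le phi phi' (a : S) n :
  (forall i x, (i <= n)%N -> phi i x = phi' i x) -> ext1 phi a n = ext1 phi' a n.
Proof.
by move=> eq_phi; rewrite !ext1E; apply: eq_diag_sum_le => i r le_in _; apply: eq_phi.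
Qed.

Lemma ext2_eq_le f f' (a b a' b' : S) n :
  (forall i x y, (i <= n)%N -> f i x y = f' i x y) ->
  (forall m, (m <= n)%N -> a m = a' m /\ b m = b' m) ->
  ext2 f a b n = ext2 f' a' b' n.
Proof.
move=> eq_f eq_ab; rewrite !ext2E; apply: eq_diag_sum_le => i r le_in le_rn.
apply: eq_diag_sum_le => j s le_jr le_sr; rewrite eq_f //.
case: (eq_ab j (leq_trans le_jr le_rn)) => -> _.
by case: (eq_ab s (leq_trans le_sr le_rn)) => _ ->.
Qed.

Lemma ext3_eq_le g g' (a b c a' b' c' : S) n :
  (forall i x y z, (i <= n)%N -> g i x y z = g' i x y z) ->
  (forall m, (m <= n)%N -> [/\ a m = a' m, b m = b' m & c m = c' m]) ->
  ext3 g a b c n = ext3 g' a' b' c' n.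
Proof.
move=> eq_g eq_abc; rewrite !ext3E; apply: eq_diag_sum_le => i r le_in le_rn.
apply: eq_diag_sum_le => j s le_jr le_sr; apply: eq_diag_sum_le => k t le_ks le_ts.
rewrite eq_g //; case: (eq_abc j (leq_trans le_jr le_rn)) => -> _ _.
case: (eq_abc k (leq_trans le_ks (leq_trans le_sr le_rn))) => _ -> _.
by case: (eq_abc t (leq_trans le_ts (leq_trans le_sr le_rn))) => _ _ ->.
Qed.

Definition coef2 (T : S -> S -> S) : nat -> L -> L -> L :=
  fun n x y => T (tcst x) (tcst y) n.
Definition coef3 (T : S -> S -> S -> S) : nat -> L -> L -> L -> L :=
  fun n x y z => T (tcst x) (tcst y) (tcst z) n.

Lemma coef2_bilin T : tbilinear T -> bilin_seq (coef2 T).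
Proof.
move=> [Tl Tr] n; split=> [y|x] c u v; rewrite /coef2 tcstZD.
  exact: (congr1 (fun a => a n) (tlinearP (Tl _) c _ _)).
exact: (congr1 (fun a => a n) (tlinearP (Tr _) c _ _)).
Qed.

Lemma coef3_trilin T : ttrilinear T -> trilin_seq (coef3 T).
Proof.
move=> [T1 T2 T3] n; split; [|split] => [y z|x z|x y] c u v; rewrite /coef3 tcstZD.
- exact: (congr1 (fun a => a n) (tlinearP (T1 _ _) c _ _)).
- exact: (congr1 (fun a => a n) (tlinearP (T2 _ _) c _ _)).
- exact: (congr1 (fun a => a n) (tlinearP (T3 _ _) c _ _)).
Qed.

Lemma ext2_coef2 T : tbilinear T -> ext2 (coef2 T) = T.
Proof.
move=> Tlin; apply: (tbilinear_eq (ext2_tbilinear (coef2_bilin Tlin)) Tlin) => x y.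
exact: ext2_tcst (coef2_bilin Tlin).
Qed.

Lemma ext3_coef3 T : ttrilinear T -> ext3 (coef3 T) = T.
Proof.
move=> Tlin; apply: (ttrilinear_eq (ext3_ttrilinear (coef3_trilin Tlin)) Tlin) => x y z.
exact: ext3_tcst (coef3_trilin Tlin).
Qed.

End Extensions.

Section Rearrange.
Variable V : zmodType.

Lemma rearrange6_eq0 (A B C D E F : V) :
  A + B = (C + D) + (E + F) -> A - D - F + B - E - C = 0.
Proof.
move=> eqAB; apply/eqP; rewrite -(subrr (A + B)) {2}eqAB !opprD !addrA; apply/eqP.
rewrite (addrAC _ (- F) B) (addrAC _ (- D) B) (addrAC _ (- E) (- C)).
by rewrite (addrAC _ (- F) (- C)) (addrAC _ (- D) (- C)) (addrAC _ (- F) (- E)).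
Qed.

Lemma rearrange8_eq0 (A B C D E F G H : V) :
  A + B = (C + D) + (E + F) + (G + H) -> A - C - E - G + B - D - F - H = 0.
Proof.
move=> eqAB; apply/eqP; rewrite -(subrr (A + B)) {2}eqAB !opprD !addrA; apply/eqP.
rewrite (addrAC _ (- G) B) (addrAC _ (- E) B) (addrAC _ (- C) B).
by rewrite (addrAC _ (- G) (- D)) (addrAC _ (- E) (- D)) (addrAC _ (- G) (- F)).
Qed.

End Rearrange.

Section LeadingTerm.
Variables (K : fieldType) (L : lmodType K).
Variables (br : L -> L -> L) (tr : L -> L -> L -> L) (al : L -> L).
Variables (f : nat -> L -> L -> L) (g : nat -> L -> L -> L -> L) (N : nat).
Hypotheses (al_lin : lin1 al) (f_lin : bilin_seq f) (g_lin : trilin_seq g).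
Hypotheses (f0 : forall x y, f 0%N x y = br x y)
  (g0 : forall x y z, g 0%N x y z = tr x y z) (N_gt0 : (0 < N)%N)
  (f_vanish : forall i, (0 < i < N)%N -> forall x y, f i x y = 0)
  (g_vanish : forall i, (0 < i < N)%N -> forall x y z, g i x y z = 0).

Lemma extal_tcst x : extal al (tcst x) = tcst (al x).
Proof. by apply: funext => -[|n]; rewrite /extal /= ?lin10. Qed.

Lemma ext2_tcstr_leading a z : ext2 f a (tcst z) N = br (a N) z + f N (a 0%N) z.
Proof. by rewrite ext2_tcstr // diag_sum_endsE // ?f0 // => i r /f_vanish ->. Qed.

Lemma ext2_tcstl_leading a z : ext2 f (tcst z) a N = br z (a N) + f N z (a 0%N).
Proof. by rewrite ext2_tcstl // diag_sum_endsE // ?f0 // => i r /f_vanish ->. Qed.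

Lemma ext3_tcst23_leading a y z :
  ext3 g a (tcst y) (tcst z) N = tr (a N) y z + g N (a 0%N) y z.
Proof. by rewrite ext3_tcst23 // diag_sum_endsE // ?g0 // => i r /g_vanish ->. Qed.

Lemma ext3_tcst13_leading a x z :
  ext3 g (tcst x) a (tcst z) N = tr x (a N) z + g N x (a 0%N) z.
Proof. by rewrite ext3_tcst13 // diag_sum_endsE // ?g0 // => i r /g_vanish ->. Qed.

Lemma ext3_tcst12_leading a x y :
  ext3 g (tcst x) (tcst y) a N = tr x y (a N) + g N x y (a 0%N).
Proof. by rewrite ext3_tcst12 // diag_sum_endsE // ?g0 // => i r /g_vanish ->. Qed.

Hypothesis ids : HLYA_identities (ext2 f) (ext3 g) (extal al).

(* On constant series, the degree-N part of each identity of the deformation is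
   the corresponding cocycle condition on (f N, g N). *)
Lemma leading_term_cocycle : HomZ23 br tr al (f N) (g N).
Proof.
have [h1 [h2 [h3 [h4 [h5 [h6 [h7 h8]]]]]]] := ids.
have coefN (u v : nat -> L) : u = v -> u N = v N by move->.
have ext2_tcst' := ext2_tcst _ _ f_lin; have ext3_tcst' := ext3_tcst _ _ _ g_lin.
split; [split | split | | | split].
- exact: f_lin.
- by move=> x; have := coefN _ _ (h3 (tcst x)); rewrite ext2_tcst'.
- move=> x y; have := coefN _ _ (h1 (tcst x) (tcst y)).
  by rewrite !extal_tcst !ext2_tcst' /extal => <-.
- exact: g_lin.
- by move=> x z; have := coefN _ _ (h4 (tcst x) (tcst z)); rewrite ext3_tcst'.
- move=> x y z; have := coefN _ _ (h2 (tcst x) (tcst y) (tcst z)).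
  by rewrite !extal_tcst !ext3_tcst' /extal => <-.
- move=> x y z u; have := coefN _ _ (h7 (tcst x) (tcst y) (tcst z) (tcst u)).
  rewrite !extal_tcst !ext2_tcst' !ext3_tcst' ext3_tcst12_leading !fctE.
  by rewrite ext2_tcstr_leading ext2_tcstl_leading /= !f0 !g0 => /rearrange6_eq0.
- move=> x y u v w.
  have := coefN _ _ (h8 (tcst u) (tcst v) (tcst w) (tcst x) (tcst y)).
  rewrite !extal_tcst !ext3_tcst' !fctE !ext3_tcst12_leading.
  by rewrite ext3_tcst23_leading ext3_tcst13_leading /= !g0 => /rearrange8_eq0.
- move=> x y z; have := coefN _ _ (h5 (tcst x) (tcst y) (tcst z)).
  by rewrite !extal_tcst !ext2_tcst' !ext3_tcst' !fctE !ext2_tcstr_leading /= !f0.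
- move=> x y z u; have := coefN _ _ (h6 (tcst x) (tcst y) (tcst z) (tcst u)).
  by rewrite !extal_tcst !ext2_tcst' !fctE !ext3_tcst23_leading /= !f0.
Qed.

End LeadingTerm.

Section Inverse.
Variables (K : fieldType) (L : lmodType K).
Local Notation S := (nat -> L).
Variable phi : nat -> L -> L.
Hypotheses (phi_lin : lin1_seq phi) (phi0 : forall x, phi 0%N x = x).
Local Notation P := (ext1 phi).
Let P_lin := ext1_tlinear phi_lin.

(* Since phi 0 = id, the map a |-> a - P a raises the t-adic order, so the
   Neumann series of its iterates converges coefficientwise to P^-1. *)
Definition defect (a : S) : S := a - P a.

Lemma defectE a n : defect a n = - \sum_(i < n) phi i.+1 (a (n - i.+1)%N).
Proof.
by rewrite /defect !fctE /= ext1E /diag_sum big_ord_recl /= subn0 phi0 opprD addNKr.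
Qed.

Lemma eq_defect_lt a b n :
  (forall m, (m < n)%N -> a m = b m) -> defect a n = defect b n.
Proof.
move=> eq_ab; rewrite !defectE; congr (- _); apply: eq_bigr => i _.
by rewrite eq_ab // ltn_subrL /= (leq_ltn_trans _ (ltn_ord i)).
Qed.

Lemma defectD a b : defect (a + b) = defect a + defect b.
Proof. by rewrite /defect tlinearD // opprD addrACA. Qed.

Lemma iter_defect_lt k a n : (n < k)%N -> iter k defect a n = 0.
Proof.
elim: k n => // k IHk n lt_nk /=.
rewrite (@eq_defect_lt _ 0) => [|m lt_mn]; last by rewrite IHk // (leq_trans lt_mn).
by rewrite defectE big1 ?oppr0 // => i _; rewrite lin10.
Qed.

Lemma defect_sum (N : nat) a :
  defect (\sum_(k < N) iter k defect a) = \sum_(k < N) iter k.+1 defect a.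
Proof.
elim: N => [|N IHN]; last by rewrite !big_ord_recr defectD IHN.
by rewrite !big_ord0 /defect tlinear0 ?subr0.
Qed.

Definition ext1_inv (a : S) : S := fun n => \sum_(k < n.+1) iter k defect a n.

Lemma ext1_inv_partial n m a : (m <= n)%N ->
  ext1_inv a m = \sum_(k < n.+1) iter k defect a m.
Proof.
move=> le_mn; rewrite /ext1_inv.
rewrite (big_ord_widen n.+1 (fun k => iter k defect a m) (le_mn : (m.+1 <= n.+1)%N)).
by rewrite big_mkcond; apply: eq_bigr => k _; case: ltnP => // /iter_defect_lt->.
Qed.

Lemma ext1_invK : cancel ext1_inv P.
Proof.
move=> a; apply: funext => n.
have -> : P (ext1_inv a) n = ext1_inv a n - defect (ext1_inv a) n.
  by rewrite /defect fctE /= opprB addrC subrK.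
rewrite (@eq_defect_lt _ (\sum_(k < n.+1) iter k defect a)) => [|m lt_mn]; last first.
  by rewrite fct_sumE /= (ext1_inv_partial _ (ltnW lt_mn)).
rewrite defect_sum big_ord_recr /= !fctE fct_sumE /=.
have /= -> := iter_defect_lt a (ltnSn n).
by rewrite addr0 /ext1_inv big_ord_recl addrK.
Qed.

Lemma ext1_inj : injective P.
Proof.
move=> u v eq_uv; set w := (-1) *: v + u.
have Pw : P w = 0 by rewrite tlinearP // eq_uv scaleN1r addNr.
have iter_w k : iter k defect w = w by elim: k => //= k ->; rewrite /defect Pw subr0.
apply: funext => n; apply/eqP; rewrite -subr_eq0.
have := iter_defect_lt w (ltnSn n); rewrite iter_w /w !fctE /= => <-.
by rewrite scaleN1r addrC.
Qed.

Lemma ext1K : cancel P ext1_inv.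
Proof. by move=> a; apply: ext1_inj; rewrite ext1_invK. Qed.

Lemma ext1_inv_tlinear : tlinear ext1_inv.
Proof.
split=> [c a b|a]; apply: ext1_inj; first by rewrite (tlinearP P_lin) !ext1_invK.
by rewrite (tlinear_tsh P_lin) !ext1_invK.
Qed.

Variable al : L -> L.
Hypotheses (al_lin : lin1 al) (phi_al : forall i x, phi i (al x) = al (phi i x)).

Lemma ext1_extal a : P (extal al a) = extal al (P a).
Proof.
apply: funext => n; rewrite /extal !ext1E /diag_sum lin1_sum //.
by apply: eq_bigr => i _; rewrite phi_al.
Qed.

Lemma ext1_inv_extal a : ext1_inv (extal al a) = extal al (ext1_inv a).
Proof. by apply: ext1_inj; rewrite ext1_extal !ext1_invK. Qed.

End Inverse.

Lemma HLYA_identities_conj (V W : zmodType) (alV : V -> V) (alW : W -> W)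
    (br : V -> V -> V) (tr : V -> V -> V -> V) (P : V -> W) (Q : W -> V) :
  cancel P Q -> (forall v, P (alV v) = alW (P v)) -> (forall w, Q (alW w) = alV (Q w)) ->
  {morph P : u v / u + v} -> P 0 = 0 ->
  HLYA_identities br tr alV ->
  HLYA_identities (fun a b => P (br (Q a) (Q b)))
                  (fun a b c => P (tr (Q a) (Q b) (Q c))) alW.
Proof.
move=> PK P_al Q_al PD P0 [h1 [h2 [h3 [h4 [h5 [h6 [h7 h8]]]]]]].
split; first by move=> x y; rewrite !Q_al -h1 P_al.
split; first by move=> x y z; rewrite !Q_al -h2 P_al.
split; first by move=> x; rewrite h3.
split; first by move=> x y; rewrite h4.
split; first by move=> x y z; rewrite !PK !Q_al -!PD h5.
split; first by move=> x y z u; rewrite !PK !Q_al -!PD h6.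
split; first by move=> x y u v; rewrite !PK !Q_al -!PD h7.
by move=> x y z u v; rewrite !PK !Q_al -!PD h8.
Qed.

Section Pushforward.
Variables (K : fieldType) (L : lmodType K).
Variables (br : L -> L -> L) (tr : L -> L -> L -> L) (al : L -> L).
Variables (f : nat -> L -> L -> L) (g : nat -> L -> L -> L -> L).
Hypotheses (al_lin : lin1 al) (f_lin : bilin_seq f) (g_lin : trilin_seq g).
Hypotheses (f0 : f 0%N = br) (g0 : g 0%N = tr).

Definition pushf (phi : nat -> L -> L) : nat -> L -> L -> L :=
  coef2 (fun a b => ext1 phi (ext2 f (ext1_inv phi a) (ext1_inv phi b))).
Definition pushg (phi : nat -> L -> L) : nat -> L -> L -> L -> L :=
  coef3 (fun a b c =>
    ext1 phi (ext3 g (ext1_inv phi a) (ext1_inv phi b) (ext1_inv phi c))).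

Variable phi : nat -> L -> L.
Hypotheses (phi_lin : lin1_seq phi) (phi0 : forall x, phi 0%N x = x).
Local Notation P := (ext1 phi).
Local Notation Q := (ext1_inv phi).

Let P_lin := ext1_tlinear phi_lin.
Let Q_lin := ext1_inv_tlinear phi_lin phi0.
Let push2_lin := tbilinear_conj (ext2_tbilinear f_lin) P_lin Q_lin.
Let push3_lin := ttrilinear_conj (ext3_ttrilinear g_lin) P_lin Q_lin.

Lemma pushf_lin : bilin_seq (pushf phi).
Proof. exact: coef2_bilin push2_lin. Qed.

Lemma pushg_lin : trilin_seq (pushg phi).
Proof. exact: coef3_trilin push3_lin. Qed.

Lemma ext2_pushf : ext2 (pushf phi) = fun a b => P (ext2 f (Q a) (Q b)).
Proof. exact: ext2_coef2 push2_lin. Qed.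

Lemma ext3_pushg : ext3 (pushg phi) = fun a b c => P (ext3 g (Q a) (Q b) (Q c)).
Proof. exact: ext3_coef3 push3_lin. Qed.

Lemma ext2_pushf_ext1 a b : ext2 (pushf phi) (P a) (P b) = P (ext2 f a b).
Proof. by rewrite ext2_pushf !ext1K. Qed.

Lemma ext3_pushg_ext1 a b c :
  ext3 (pushg phi) (P a) (P b) (P c) = P (ext3 g a b c).
Proof. by rewrite ext3_pushg !ext1K. Qed.

Lemma ext1_inv_tcst0 x : Q (tcst x) 0%N = x.
Proof.
have := congr1 (fun a => a 0%N) (ext1_invK phi_lin phi0 (tcst x)).
by rewrite /= ext1_0 phi0.
Qed.

Lemma pushf0 x y : pushf phi 0 x y = br x y.
Proof. by rewrite /pushf /coef2 ext1_0 phi0 ext2_0 !ext1_inv_tcst0 f0. Qed.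

Lemma pushg0 x y z : pushg phi 0 x y z = tr x y z.
Proof. by rewrite /pushg /coef3 ext1_0 phi0 ext3_0 !ext1_inv_tcst0 g0. Qed.

Hypotheses (phi_al : forall i x, phi i (al x) = al (phi i x))
  (ids : HLYA_identities (ext2 f) (ext3 g) (extal al)).

Lemma HLYA_identities_push :
  HLYA_identities (ext2 (pushf phi)) (ext3 (pushg phi)) (extal al).
Proof.
rewrite ext2_pushf ext3_pushg; apply: HLYA_identities_conj ids.
- exact: ext1K.
- exact: ext1_extal.
- exact: ext1_inv_extal.
- by move=> a b; apply: tlinearD.
- exact: tlinear0.
Qed.

End Pushforward.

Section Normalization.
Variables (K : fieldType) (L : lmodType K).
Local Notation S := (nat -> L).
Variables (br : L -> L -> L) (tr : L -> L -> L -> L) (al : L -> L).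
Variables (f : nat -> L -> L -> L) (g : nat -> L -> L -> L -> L).
Hypotheses (al_lin : lin1 al) (f_lin : bilin_seq f) (g_lin : trilin_seq g).
Hypotheses (f0 : f 0%N = br) (g0 : g 0%N = tr)
  (ids : HLYA_identities (ext2 f) (ext3 g) (extal al)).

Record normalized (phi : nat -> L -> L) (N : nat) : Prop := Normalized {
  normalized_lin : lin1_seq phi;
  normalized_al : forall i x, phi i (al x) = al (phi i x);
  normalized_id : forall x, phi 0%N x = x;
  normalized_f : forall i, (0 < i < N)%N -> forall x y, pushf f phi i x y = 0;
  normalized_g : forall i, (0 < i < N)%N -> forall x y z, pushg g phi i x y z = 0 }.

Definition id_seq : nat -> L -> L := fun i => if i is 0%N then id else fun=> 0.

Lemma normalized1 : normalized id_seq 1.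
Proof.
split=> [[|i] c x y /=|[|i] x /=|x //|i /andP[i_gt0 i_lt1]|i /andP[i_gt0 i_lt1]].
- by [].
- by rewrite scaler0 addr0.
- by [].
- by rewrite lin10.
- by rewrite ltnS leqNgt i_gt0 in i_lt1.
- by rewrite ltnS leqNgt i_gt0 in i_lt1.
Qed.

Lemma normalized_cocycle phi N : normalized phi N -> (0 < N)%N ->
  HomZ23 br tr al (pushf f phi N) (pushg g phi N).
Proof.
move=> [phi_lin phi_al phi0 f_vanish g_vanish] N_gt0.
apply: leading_term_cocycle => //.
- exact: pushf_lin.
- exact: pushg_lin.
- exact: pushf0.
- exact: pushg0.
- exact: HLYA_identities_push.
Qed.

Definition perturb N (h : L -> L) (a : S) : S := a + iter N tsh (fun n => h (a n)).

Definition perturb_seq (phi : nat -> L -> L) N (h : L -> L) : nat -> L -> L :=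
  fun n x => phi n x + (if (N <= n)%N then h (phi (n - N)%N x) else 0).

Section Step.
Variables (phi : nat -> L -> L) (N : nat) (h : L -> L).
Hypotheses (phiN : normalized phi N) (N_gt0 : (0 < N)%N) (h_cochain : HomC1 al h).
Let phi_lin := normalized_lin phiN.
Let phi0 := normalized_id phiN.
Let h_lin : lin1 h := h_cochain.1.
Local Notation phi' := (perturb_seq phi N h).
Local Notation Theta := (perturb N h).

Lemma perturb_seq_lin : lin1_seq phi'.
Proof.
move=> n c x y; rewrite /perturb_seq phi_lin; case: ifP => _; last by rewrite !addr0.
by rewrite phi_lin h_lin scalerDr addrACA.
Qed.

Lemma perturb_seq0 x : phi' 0%N x = x.
Proof. by rewrite /perturb_seq leqNgt N_gt0 addr0 phi0. Qed.

Lemma perturb_seq_al n x : phi' n (al x) = al (phi' n x).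
Proof.
rewrite /perturb_seq (lin1D al_lin) (normalized_al phiN).
case: ifP => _; last by rewrite (lin10 al_lin).
by rewrite (normalized_al phiN) h_cochain.2.
Qed.

Lemma perturb_tlinear : tlinear Theta.
Proof.
exact: (tlinear_add tlinear_id (tlinear_comp (tlinear_iter_tsh N) (tlinear_map h_lin))).
Qed.

Lemma perturb_tcst x : Theta (tcst x) = tcst x + iter N tsh (tcst (h x)).
Proof. by congr (_ + iter N tsh _); apply: funext => -[|n] //=; rewrite lin10. Qed.

Lemma ext1_perturb_seq : ext1 phi' = fun a => Theta (ext1 phi a).
Proof.
apply: tlinear_eq (ext1_tlinear perturb_seq_lin) _ _ => [|x].
  exact: tlinear_comp perturb_tlinear (ext1_tlinear phi_lin).
apply: funext => n; rewrite ext1_tcst; last exact: perturb_seq_lin.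
by rewrite /perturb !fctE /= iter_tshE !ext1_tcst.
Qed.

Lemma ext1_inv_perturb a : ext1_inv phi' (Theta a) = ext1_inv phi a.
Proof.
apply: (ext1_inj perturb_seq_lin perturb_seq0).
by rewrite (ext1_invK perturb_seq_lin perturb_seq0) ext1_perturb_seq ext1_invK.
Qed.

Lemma ext2_pushf_perturb a b :
  ext2 (pushf f phi') (Theta a) (Theta b) = Theta (ext2 (pushf f phi) a b).
Proof.
rewrite (ext2_pushf f_lin perturb_seq_lin perturb_seq0) (ext2_pushf f_lin phi_lin phi0).
by rewrite !ext1_inv_perturb ext1_perturb_seq.
Qed.

Lemma ext3_pushg_perturb a b c :
  ext3 (pushg g phi') (Theta a) (Theta b) (Theta c)
  = Theta (ext3 (pushg g phi) a b c).
Proof.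
rewrite (ext3_pushg g_lin perturb_seq_lin perturb_seq0) (ext3_pushg g_lin phi_lin phi0).
by rewrite !ext1_inv_perturb ext1_perturb_seq.
Qed.

Lemma pushf_perturb n x y : (n <= N)%N ->
  pushf f phi' n x y = pushf f phi n x y - (if n == N then deltaI1 br h x y else 0).
Proof.
move=> le_nN.
have lin' := pushf_lin f_lin perturb_seq_lin perturb_seq0.
have [F'l F'r] := ext2_tbilinear lin'.
have := congr1 (fun a => a n) (ext2_pushf_perturb (tcst x) (tcst y)).
rewrite !perturb_tcst (tlinearD _ _ (F'l _)) !(tlinearD _ _ (F'r _)).
rewrite !(tlinear_iter _ _ (F'l _)) !(tlinear_iter _ _ (F'r _)) -iterD.
rewrite !(ext2_tcst _ _ lin') (ext2_tcst _ _ (pushf_lin f_lin phi_lin phi0)).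
have lt_nNN : (n < N + N)%N by lia.
rewrite /perturb !fctE /= !iter_tshE [(N + N <= n)%N]leqNgt lt_nNN /= addr0.
case: (ltngtP n N) => [lt_nN | lt_Nn | ->].
- by rewrite !addr0 subr0.
- by rewrite ltnNge le_nN in lt_Nn.
rewrite subnn !(pushf0 f0 perturb_seq_lin perturb_seq0) (pushf0 f0 phi_lin phi0).
move=> E; apply: (addIr (br x (h y) + br (h x) y)).
by rewrite addrA E /deltaI1 opprB [_ + (_ - _)]addrA subrK.
Qed.

Lemma pushg_perturb n x y z : (n <= N)%N ->
  pushg g phi' n x y z
  = pushg g phi n x y z - (if n == N then deltaII1 tr h x y z else 0).
Proof.
move=> le_nN.
have lin' := pushg_lin g_lin perturb_seq_lin perturb_seq0.
have [G'1 G'2 G'3] := ext3_ttrilinear lin'.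
have := congr1 (fun a => a n) (ext3_pushg_perturb (tcst x) (tcst y) (tcst z)).
rewrite !perturb_tcst (tlinearD _ _ (G'1 _ _)) !(tlinearD _ _ (G'2 _ _)).
rewrite !(tlinearD _ _ (G'3 _ _)) !(tlinear_iter _ _ (G'1 _ _)).
rewrite !(tlinear_iter _ _ (G'2 _ _)) !(tlinear_iter _ _ (G'3 _ _)) -!iterD.
rewrite !(ext3_tcst _ _ _ lin') (ext3_tcst _ _ _ (pushg_lin g_lin phi_lin phi0)).
have [lt_nNN lt_nNNN] : (n < N + N)%N /\ (n < N + N + N)%N by lia.
rewrite /perturb !fctE /= !iter_tshE (leqNgt (N + N + N)) lt_nNNN.
rewrite !(leqNgt (N + N)) lt_nNN /= !addr0.
case: (ltngtP n N) => [lt_nN | lt_Nn | ->].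
- by rewrite !addr0 subr0.
- by rewrite ltnNge le_nN in lt_Nn.
rewrite subnn !(pushg0 g0 perturb_seq_lin perturb_seq0) (pushg0 g0 phi_lin phi0).
move=> E; apply: (addIr (tr x y (h z) + tr x (h y) z + tr (h x) y z)).
rewrite [LHS]addrA [in LHS]addrA E /deltaII1 opprB.
have -> : tr (h x) y z + tr x (h y) z + tr x y (h z)
          = tr x y (h z) + tr x (h y) z + tr (h x) y z.
  by rewrite addrC (addrC (tr (h x) y z)) addrA.
by rewrite [_ + (_ - _)]addrA subrK.
Qed.

Lemma normalized_step :
  pushf f phi N = deltaI1 br h -> pushg g phi N = deltaII1 tr h ->
  normalized phi' N.+1.
Proof.
move=> pushfN pushgN; split.
- exact: perturb_seq_lin.
- exact: perturb_seq_al.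
- exact: perturb_seq0.
- move=> n /andP[n_gt0 lt_nSN] x y; rewrite pushf_perturb //.
  case: eqP => [->|/eqP ne_nN]; first by rewrite pushfN subrr.
  by rewrite (normalized_f phiN) ?subr0 // n_gt0 ltn_neqAle ne_nN.
- move=> n /andP[n_gt0 lt_nSN] x y z; rewrite pushg_perturb //.
  case: eqP => [->|/eqP ne_nN]; first by rewrite pushgN subrr.
  by rewrite (normalized_g phiN) ?subr0 // n_gt0 ltn_neqAle ne_nN.
Qed.

End Step.

Hypothesis H0 : HomH23_zero br tr al.

Definition corrects (phi : nat -> L -> L) N (h : L -> L) : Prop :=
  [/\ HomC1 al h, pushf f phi N = deltaI1 br h & pushg g phi N = deltaII1 tr h].

Definition gauge_correction (phi : nat -> L -> L) N : L -> L :=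
  epsilon (inhabits id) (corrects phi N).

Lemma gauge_correctionP phi N : normalized phi N -> (0 < N)%N ->
  corrects phi N (gauge_correction phi N).
Proof.
by move=> phiN N_gt0; apply: epsilon_spec; apply: H0; apply: normalized_cocycle.
Qed.

Fixpoint gauge (k : nat) : nat -> L -> L :=
  if k is k'.+1 then perturb_seq (gauge k') k (gauge_correction (gauge k') k)
  else id_seq.

Lemma gauge_normalized k : normalized (gauge k) k.+1.
Proof.
elim: k => [|k IHk]; first exact: normalized1.
have [h_cochain pushfk pushgk] := gauge_correctionP IHk (ltn0Sn k).
exact: normalized_step.
Qed.

Lemma gauge_stable k i x : (i <= k)%N -> gauge k i x = gauge i i x.
Proof.
move=> le_ik; rewrite -(subnKC le_ik); elim: (k - i)%N => [|m IHm]; first by rewrite addn0.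
by rewrite addnS /= /perturb_seq IHm leqNgt ltnS leq_addr addr0.
Qed.

(* The gauges stabilise degree by degree, so their diagonal is the limit. *)
Definition gauge_lim : nat -> L -> L := fun i => gauge i i.

Lemma gauge_lim_lin : lin1_seq gauge_lim.
Proof. by move=> i; apply: (normalized_lin (gauge_normalized i)). Qed.

Lemma gauge_lim0 : gauge_lim 0%N = id.
Proof. by apply: funext => x; apply: (normalized_id (gauge_normalized 0)). Qed.

Lemma ext1_gauge_lim n m : (m <= n)%N ->
  forall a, ext1 gauge_lim a m = ext1 (gauge n) a m.
Proof.
move=> le_mn a; apply: ext1_eq_le => i x le_im.
by rewrite /gauge_lim gauge_stable // (leq_trans le_im).
Qed.

Lemma pushf_gauge n i x y : (i <= n)%N ->
  pushf f (gauge n) i x y = null_f br i x y.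
Proof.
have [lin _ id0 vanish _] := gauge_normalized n.
by case: i => [|i] le_in; [apply: pushf0 | apply: vanish].
Qed.

Lemma pushg_gauge n i x y z : (i <= n)%N ->
  pushg g (gauge n) i x y z = null_g tr i x y z.
Proof.
have [lin _ id0 _ vanish] := gauge_normalized n.
by case: i => [|i] le_in; [apply: pushg0 | apply: vanish].
Qed.

Lemma ext1_gauge_lim_ext2 a b :
  ext1 gauge_lim (ext2 f a b) = ext2 (null_f br) (ext1 gauge_lim a) (ext1 gauge_lim b).
Proof.
apply: funext => n; have [lin _ id0 _ _] := gauge_normalized n.
rewrite (ext1_gauge_lim (leqnn n)) -(ext2_pushf_ext1 f_lin lin id0).
apply: ext2_eq_le => [i x y|m le_mn]; first exact: pushf_gauge.
by rewrite !(ext1_gauge_lim le_mn).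
Qed.

Lemma ext1_gauge_lim_ext3 a b c :
  ext1 gauge_lim (ext3 g a b c)
  = ext3 (null_g tr) (ext1 gauge_lim a) (ext1 gauge_lim b) (ext1 gauge_lim c).
Proof.
apply: funext => n; have [lin _ id0 _ _] := gauge_normalized n.
rewrite (ext1_gauge_lim (leqnn n)) -(ext3_pushg_ext1 g_lin lin id0).
apply: ext3_eq_le => [i x y z|m le_mn]; first exact: pushg_gauge.
by rewrite !(ext1_gauge_lim le_mn).
Qed.

Lemma deformation_trivial : trivial_deformation br tr al f g.
Proof.
have id0 x : gauge_lim 0%N x = x by rewrite gauge_lim0.
exists gauge_lim; split.
- exact: (conj gauge_lim_lin gauge_lim0).
- exists (ext1_inv gauge_lim); first exact: ext1K gauge_lim_lin id0.
  exact: ext1_invK gauge_lim_lin id0.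
- by apply: ext1_extal al_lin _ => i x; apply: (normalized_al (gauge_normalized i)).
- exact: ext1_gauge_lim_ext2.
- exact: ext1_gauge_lim_ext3.
Qed.

End Normalization.

Theorem mainTheorem5 (K : fieldType) (L : lmodType K)
  (br : L -> L -> L) (tr : L -> L -> L -> L) (al : L -> L) :
  HLYA br tr al -> HomH23_zero br tr al -> analytically_rigid br tr al.
Proof.
move=> [_ _ al_lin _] H0 f g [f0 g0 f_lin g_lin ids].
exact: deformation_trivial.
Qed.
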